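(* Consider Algorithm 1 in the asynchronous model described in the context and assume $\delta\le\frac17$. Let $v,u$ be two nodes and let $T\ge T_s$. For $i\ge1$ let $f_i$ (respectively $g_i$) denote the $i$-th full frame of $v$ (respectively $u$) after $T$. Then some frame in $\{f_1,f_2\}$ together with some frame in $\{g_1,g_2\}$ forms an aligned pair, i.e., one of $(f_1,g_1),(f_1,g_2),(f_2,g_1),(f_2,g_2)$ is aligned.
   Context: Each node $u$ has a clock $C_u$ with $(1-\delta)\Delta t\le C_u(t+\Delta t)-C_u(t)\le(1+\delta)\Delta t$ for all real times $t$ and $\Delta t\ge0$; offsets between clocks are arbitrary. In Algorithm 1 each node, from its (arbitrary) start time, partitions its local time into consecutive frames of length $L$ as measured by its own clock, each frame divided into three consecutive slots of local length $L/3$; frames and slots are regarded as real-time intervals. $T_s$ is the real time by which all nodes have started. A full frame after $T$ is a frame starting at or after $T$. A pair of frames $(f,g)$ is aligned if at least one slot of $f$ lies completely within $g$ in real time. *)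

From Stdlib Require Import Reals.
Open Scope R_scope.

(* Drift bound on a hardware clock C : real time -> local time. *)
Definition clock_ok (delta : R) (C : R -> R) : Prop :=
  forall t dt, 0 <= dt ->
    (1 - delta) * dt <= C (t + dt) - C t <= (1 + delta) * dt.

(* Frame k (k = 0,1,2,...) of a node with clock C started at real time s,
   frame length L: the real-time interval where the local time elapsed since
   the start lies in [kL, (k+1)L). *)
Definition frame (C : R -> R) (s L : R) (k : nat) (t : R) : Prop :=
  s <= t /\ C s + INR k * L <= C t < C s + (INR k + 1) * L.

Definition slot (C : R -> R) (s L : R) (k j : nat) (t : R) : Prop :=
  s <= t /\
  C s + INR k * L + INR j * (L / 3) <= C t < C s + INR k * L + (INR j + 1) * (L / 3).

Definition frame_start (C : R -> R) (s L : R) (k : nat) (a : R) : Prop :=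
  s <= a /\ C a = C s + INR k * L.

Definition first_full_frame (C : R -> R) (s L T : R) (k : nat) : Prop :=
  (exists a, frame_start C s L k a /\ T <= a) /\
  (forall j a, (j < k)%nat -> frame_start C s L j a -> a < T).

Definition aligned (Cf : R -> R) (sf : R) (Cg : R -> R) (sg : R) (L : R)
  (kf kg : nat) : Prop :=
  exists j, (j < 3)%nat /\ forall t, slot Cf sf L kf j t -> frame Cg sg L kg t.

(* With drift at most 1/7, a slot of local length L/3 lasts between 7L/24 and
   7L/18 real time and a frame at least 7L/8, while both first full frames
   start within 7L/6 after T.  If f1 starts first, the first boundary among
   the six slots of f1 and f2 at or after the start of g1 comes at most 7L/18
   after it and is not the end of f2 (six slots last at least 7L/4); the slot it opens then ends
   at most 7L/9 < 7L/8 after the start of g1, hence inside g1.  If g1 starts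
   first, the first slot of f1 lies in g1 or in g2, or else the second slot
   of f1 lies in g2. *)
From Stdlib Require Import Reals Lra Lia.
Open Scope R_scope.

Lemma clock_ok_weaken d d' C : d <= d' -> clock_ok d C -> clock_ok d' C.
Proof.
  intros Hdd' HC t dt Hdt.
  specialize (HC t dt Hdt).
  assert ((1 - d') * dt <= (1 - d) * dt) by (apply Rmult_le_compat_r; lra).
  assert ((1 + d) * dt <= (1 + d') * dt) by (apply Rmult_le_compat_r; lra).
  lra.
Qed.

Section Clock.

Variables (d : R) (C : R -> R).
Hypotheses (HC : clock_ok d C) (Hd : d < 1).

Lemma clock_elapsed x y : x <= y -> (1 - d) * (y - x) <= C y - C x <= (1 + d) * (y - x).
Proof.
  intros Hxy. specialize (HC x (y - x) ltac:(lra)).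
  replace (x + (y - x)) with y in HC by ring. exact HC.
Qed.

Lemma clock_increasing x y : x < y -> C x < C y.
Proof.
  intros Hxy. pose proof (clock_elapsed x y ltac:(lra)).
  assert (0 < (1 - d) * (y - x)) by (apply Rmult_lt_0_compat; lra).
  lra.
Qed.

Lemma clock_le_reflect x y : C x <= C y -> x <= y.
Proof.
  intros Hc. destruct (Rle_lt_dec x y) as [|Hyx]; [assumption|].
  pose proof (clock_increasing y x Hyx). lra.
Qed.

Lemma clock_lt_reflect x y : C x < C y -> x < y.
Proof.
  intros Hc. destruct (Rlt_le_dec x y) as [|Hyx]; [assumption|].
  destruct (Req_dec y x) as [->|]; [lra|].
  pose proof (clock_increasing y x ltac:(lra)). lra.
Qed.

Lemma clock_monotone x y : x <= y -> C x <= C y.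
Proof.
  intros Hxy. destruct (Req_dec x y) as [->|]; [lra|].
  apply Rlt_le, clock_increasing. lra.
Qed.

Lemma clock_injective x y : C x = C y -> x = y.
Proof. intros Hc. apply Rle_antisym; apply clock_le_reflect; lra. Qed.

Lemma clock_lipschitz x y : x <= y -> Rabs (C y - C x) <= 2 * (y - x).
Proof.
  intros Hxy. pose proof (clock_elapsed x y Hxy).
  assert ((1 + d) * (y - x) <= 2 * (y - x)) by (apply Rmult_le_compat_r; lra).
  rewrite Rabs_right; lra.
Qed.

Lemma clock_continuous : continuity C.
Proof.
  intros x0 eps Heps. exists (eps / 2). split; [lra|].
  intros x [_ Hx]. simpl in *. unfold R_dist in *.
  destruct (Rle_lt_dec x0 x) as [Hle|Hlt].
  - pose proof (clock_lipschitz x0 x Hle). rewrite Rabs_right in Hx; lra.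
  - pose proof (clock_lipschitz x x0 ltac:(lra)).
    rewrite Rabs_left in Hx by lra. rewrite Rabs_minus_sym. lra.
Qed.

Lemma clock_surjective c : {t | C t = c}.
Proof.
  set (z := (Rabs (c - C 0) + 1) / (1 - d)).
  assert (Hz : (1 - d) * z = Rabs (c - C 0) + 1) by (unfold z; field; lra).
  assert (0 < z).
  { unfold z. apply Rdiv_lt_0_compat; [pose proof (Rabs_pos (c - C 0))|]; lra. }
  pose proof (clock_elapsed 0 z ltac:(lra)).
  pose proof (clock_elapsed (- z) 0 ltac:(lra)).
  pose proof (Rle_abs (c - C 0)). pose proof (Rle_abs (- (c - C 0))).
  rewrite Rabs_Ropp in *.
  destruct (IVT (fun t => C t - c) (- z) z) as [t [_ Ht]].
  - intros x. apply continuity_pt_minus; [apply clock_continuous|apply continuity_pt_const].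
    intros a b; reflexivity.
  - lra.
  - lra.
  - lra.
  - exists t. lra.
Qed.

Lemma clock_inverse : exists f : R -> R, forall c, C (f c) = c.
Proof.
  exists (fun c => proj1_sig (clock_surjective c)). intros c.
  exact (proj2_sig (clock_surjective c)).
Qed.

End Clock.

Lemma clock_local_to_real C x y D :
  clock_ok (1 / 7) C -> 0 <= D -> C y = C x + D -> 7 / 8 * D <= y - x <= 7 / 6 * D.
Proof.
  intros HC HD Hy.
  assert (Hxy : x <= y) by (apply (clock_le_reflect (1 / 7) C HC); lra).
  pose proof (clock_elapsed (1 / 7) C HC x y Hxy). lra.
Qed.

Lemma first_full_frame_start_bounds C s L T k a :
  clock_ok (1 / 7) C -> 0 < L -> s <= T -> first_full_frame C s L T k ->
  C a = C s + INR k * L -> T <= a <= T + 7 / 6 * L.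
Proof.
  intros HC HL HsT [[a1 [[Hs1 Ha1] HTa1]] Hearlier] Ha.
  assert (a = a1) as -> by (apply (clock_injective (1 / 7) C HC); [lra|]; lra).
  destruct k as [|k].
  - assert (a1 = s) by (apply (clock_injective (1 / 7) C HC); [lra|]; simpl in Ha1; lra). lra.
  - destruct (clock_surjective (1 / 7) C HC ltac:(lra) (C s + INR k * L)) as [a0 Ha0].
    assert (0 <= INR k * L) by (apply Rmult_le_pos; [apply pos_INR|lra]).
    assert (s <= a0) by (apply (clock_le_reflect (1 / 7) C HC); lra).
    assert (a0 < T) by (apply (Hearlier k); [lia|split; assumption]).
    rewrite S_INR in Ha1.
    pose proof (clock_local_to_real C a0 a1 L HC ltac:(lra) ltac:(lra)). lra.
Qed.

Lemma first_full_frame_grid C s L T k c :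
  clock_ok (1 / 7) C -> 0 < L -> s <= T -> first_full_frame C s L T k -> 0 <= c ->
  exists p : nat -> R,
    (forall n, C (p n) = C s + INR k * L + INR n * c) /\
    (forall n, 7 / 8 * c <= p (S n) - p n <= 7 / 6 * c) /\
    T <= p 0%nat <= T + 7 / 6 * L.
Proof.
  intros HC HL HsT Hfirst Hc.
  destruct (clock_inverse (1 / 7) C HC ltac:(lra)) as [f Hf].
  exists (fun n => f (C s + INR k * L + INR n * c)). split; [|split].
  - intros n. apply Hf.
  - intros n. apply (clock_local_to_real C); [assumption|assumption|].
    rewrite !Hf, S_INR. ring.
  - apply (first_full_frame_start_bounds C s L T k); try assumption.
    rewrite Hf. simpl. ring.
Qed.

Lemma bounded_increments_cross (p : nat -> R) c x K :
  (forall n, p (S n) - p n <= c) -> p 0%nat <= x -> x < p K ->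
  exists n, (n <= K)%nat /\ x <= p n <= x + c.
Proof.
  intros Hc H0. induction K as [|K IH]; intros HK; [lra|].
  destruct (Rlt_le_dec x (p K)) as [Hlt|Hle].
  - destruct (IH Hlt) as [n [Hn Hpn]]. exists n. split; [lia|exact Hpn].
  - exists (S K). specialize (Hc K). split; [lia|lra].
Qed.

Lemma increments_lower_bound (p : nat -> R) c :
  (forall n, c <= p (S n) - p n) -> forall n, INR n * c <= p n - p 0%nat.
Proof.
  intros Hc n. induction n as [|n IH]; [simpl; lra|].
  rewrite S_INR. specialize (Hc n). lra.
Qed.

Lemma slot_between_frame_bounds L (p q : nat -> R) :
  0 < L ->
  (forall n, 7 / 8 * (L / 3) <= p (S n) - p n <= 7 / 6 * (L / 3)) ->
  (forall m, 7 / 8 * L <= q (S m) - q m) ->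
  q 0%nat <= p 0%nat + 7 / 6 * L -> p 0%nat <= q 0%nat + 7 / 6 * L ->
  exists n m, (n < 6)%nat /\ (m < 2)%nat /\ q m <= p n /\ p (S n) <= q (S m).
Proof.
  intros HL Hp Hq Hqp Hpq.
  assert (Hp_up : forall n, p (S n) - p n <= 7 / 18 * L) by (intros n; specialize (Hp n); lra).
  pose proof (Hp_up 0%nat). pose proof (Hp_up 1%nat).
  pose proof (Hq 0%nat). pose proof (Hq 1%nat).
  destruct (Rle_lt_dec (p 0%nat) (q 0%nat)) as [Hv_first|Hu_first].
  - assert (p 0%nat + 7 / 4 * L <= p 6%nat).
    { assert (Hp_low : forall n, 7 / 24 * L <= p (S n) - p n) by (intros n; specialize (Hp n); lra).
      pose proof (increments_lower_bound p (7 / 24 * L) Hp_low 6).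
      simpl INR in *. lra. }
    destruct (bounded_increments_cross p (7 / 18 * L) (q 0%nat) 6 Hp_up)
      as [n [Hn Hpn]]; [lra|lra|].
    assert (n <> 6%nat) by (intros ->; lra).
    exists n, 0%nat. specialize (Hp_up n). repeat split; [lia|lia|lra|lra].
  - destruct (Rle_lt_dec (q 1%nat) (p 0%nat)).
    { exists 0%nat, 1%nat. repeat split; [lia|lia|lra|lra]. }
    destruct (Rle_lt_dec (p 1%nat) (q 1%nat)).
    { exists 0%nat, 0%nat. repeat split; [lia|lia|lra|lra]. }
    exists 1%nat, 1%nat. repeat split; [lia|lia|lra|lra].
Qed.

Lemma slot_within_frame d Cv Cu sv su L a j b P Q B E :
  clock_ok d Cv -> clock_ok d Cu -> d < 1 ->
  Cv P = Cv sv + INR a * L + INR j * (L / 3) ->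
  Cv Q = Cv sv + INR a * L + (INR j + 1) * (L / 3) ->
  Cu B = Cu su + INR b * L -> Cu E = Cu su + (INR b + 1) * L ->
  su <= B -> B <= P -> Q <= E ->
  forall t, slot Cv sv L a j t -> frame Cu su L b t.
Proof.
  intros Hv Hu Hd HP HQ HB HE HsuB HBP HQE t [_ [Ht1 Ht2]].
  assert (P <= t) by (apply (clock_le_reflect d Cv Hv Hd); lra).
  assert (t < Q) by (apply (clock_lt_reflect d Cv Hv Hd); lra).
  pose proof (clock_monotone d Cu Hu Hd B t ltac:(lra)).
  pose proof (clock_increasing d Cu Hu Hd t E ltac:(lra)).
  split; lra.
Qed.

Lemma lt6_split n : (n < 6)%nat ->
  exists i j, (i < 2)%nat /\ (j < 3)%nat /\ n = (3 * i + j)%nat.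
Proof.
  intros Hn. exists (n / 3)%nat, (n mod 3)%nat.
  pose proof (Nat.div_mod_eq n 3). pose proof (Nat.mod_upper_bound n 3). lia.
Qed.

Theorem mainTheorem4
  (delta L Ts T : R) (Cv Cu : R -> R) (sv su : R) (kv ku : nat) :
  delta <= 1 / 7 ->
  0 < L ->
  clock_ok delta Cv -> clock_ok delta Cu ->
  sv <= Ts -> su <= Ts -> Ts <= T ->
  first_full_frame Cv sv L T kv ->
  first_full_frame Cu su L T ku ->
  exists a b, (a = kv \/ a = S kv) /\ (b = ku \/ b = S ku) /\
    aligned Cv sv Cu su L a b.
Proof.
  intros Hd HL Hv Hu Hsv Hsu HT Fv Fu.
  apply (clock_ok_weaken _ (1 / 7) _ Hd) in Hv, Hu.
  destruct (first_full_frame_grid Cv sv L T kv (L / 3) Hv HL ltac:(lra) Fv ltac:(lra))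
    as (p & Hp & Hp_steps & Hp0).
  destruct (first_full_frame_grid Cu su L T ku L Hu HL ltac:(lra) Fu ltac:(lra))
    as (q & Hq & Hq_steps & Hq0).
  destruct (slot_between_frame_bounds L p q HL Hp_steps (fun m => proj1 (Hq_steps m))
              ltac:(lra) ltac:(lra)) as (n & m & Hn & Hm & Hstart & Hend).
  destruct (lt6_split n Hn) as (i & j & Hi & Hj & ->).
  exists (kv + i)%nat, (ku + m)%nat. split; [lia|]. split; [lia|].
  exists j. split; [exact Hj|].
  assert (Hq_frame0 : q 0%nat <= q m).
  { destruct m as [|[|]]; [lra|pose proof (Hq_steps 0%nat); lra|lia]. }
  apply (slot_within_frame (1 / 7) Cv Cu sv su L (kv + i) j (ku + m)
           (p (3 * i + j)%nat) (p (S (3 * i + j))) (q m) (q (S m))); try assumption; try lra.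
  - rewrite Hp, !plus_INR, mult_INR, INR_IZR_INZ. simpl. field.
  - rewrite Hp, S_INR, !plus_INR, mult_INR, INR_IZR_INZ. simpl. field.
  - rewrite Hq, plus_INR. ring.
  - rewrite Hq, S_INR, plus_INR. ring.
Qed.
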